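(* Let $c\in\mathbb{C}\setminus\{0\}$ and let $\mathbf{U}_0(\lambda;x,t)$, $\mu^{[22]}$, $\nu^{[22]}$ be as defined below. Let $\psi_1:\mathbb{R}\to\mathbb{C}$ be such that the integrals defining $$C_\mu(\lambda)=\frac1\pi\Im\Big\{\int_{\mathbb{R}}\psi_1(y)\nu^{[22]}(\lambda;y,0)^*dy\Big\},\qquad C_\nu(\lambda)=-\frac1\pi\Im\Big\{\int_{\mathbb{R}}\psi_1(y)\mu^{[22]}(\lambda;y,0)^*dy\Big\}$$ exist for a.e. $\lambda\in\mathbb{R}$ and $C_\mu,C_\nu\in L^1(\mathbb{R})$. Then $$\psi_1^{\mathbb{R}}(x,t):=\int_{\mathbb{R}}\big(C_\mu(\lambda)\mu^{[22]}(\lambda;x,t)+C_\nu(\lambda)\nu^{[22]}(\lambda;x,t)\big)d\lambda$$ is uniformly bounded for $(x,t)\in\mathbb{R}^2$.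
   Context: $\sigma_2=\begin{bmatrix}0&-\mathrm{i}\\\mathrm{i}&0\end{bmatrix}$, $\sigma_3=\mathrm{diag}(1,-1)$. $\rho(\lambda)$: branch of $\sqrt{\lambda^2+1}$ analytic off $[-\mathrm{i},\mathrm{i}]$ with $\rho\sim\lambda$ (real for real $\lambda\neq0$); $n(\lambda)$ analytic off $[-\mathrm{i},\mathrm{i}]$ with $n^2=(\lambda+\rho)/(2\rho)$, $n\to1$; $\mathbf{E}(\lambda)=n\begin{bmatrix}1&\mathrm{i}(\lambda-\rho)\\\mathrm{i}(\lambda-\rho)&1\end{bmatrix}$. Peregrine data: $\mathbf{s}=(c,-c)^\top$, $N=2|c|^2$, $w(x,t)=-2c^2(x+\mathrm{i}t)$, $\mathbf{Y}(x,t)=\big[4(1-w^* )\mathbf{s}\mathbf{s}^\top\sigma_2+2\mathrm{i}N\sigma_2\mathbf{s}^*\mathbf{s}^\top\sigma_2\big]/(4|1-w|^2+N^2)$, $\mathbf{G}(\lambda;x,t)=\mathbb{I}+\mathbf{Y}/(\lambda-\mathrm{i})+\sigma_2\mathbf{Y}^*\sigma_2/(\lambda+\mathrm{i})$. Then $\psi_0=1+2\mathrm{i}(Y_{12}-Y_{21}^* )$ is the Peregrine breather $1-4\frac{1+2\mathrm{i}(t-t_0)}{1+4(x-x_0)^2+4(t-t_0)^2}$ with $x_0=-\Re c^2/(2|c|^4)$, $t_0=\Im c^2/(2|c|^4)$, and $\mathbf{U}_0(\lambda;x,t):=\mathbf{G}(\lambda;x,t)\mathbf{E}(\lambda)e^{-\mathrm{i}\rho(\lambda)(x+\lambda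 t)\sigma_3}$, $\lambda\in\mathbb{R}\setminus\{0\}$, is a simultaneous fundamental solution of its Lax pair. Let $\mathbf{u}^{[2]}=(u^{[2]}_1,u^{[2]}_2)^\top$ be the second column of $\mathbf{U}_0$, and $\mu^{[22]}(\lambda;x,t)=(u^{[2]}_1)^2-((u^{[2]}_2)^* )^2$, $\nu^{[22]}(\lambda;x,t)=\mathrm{i}(u^{[2]}_1)^2+\mathrm{i}((u^{[2]}_2)^* )^2$; these solve the linearized NLS equation $\mathrm{i}\psi_{1t}+\frac12\psi_{1xx}+(2|\psi_0|^2-1)\psi_1+\psi_0^2\psi_1^*=0$ about $\psi_0$. *)

From HB Require Import structures.
From mathcomp Require Import all_boot all_order all_algebra.
From mathcomp Require Import all_classical all_reals all_analysis.
From mathcomp Require Import complex.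
Set Implicit Arguments. Unset Strict Implicit. Unset Printing Implicit Defensive.
Import Order.TTheory GRing.Theory Num.Theory.
Local Open Scope ring_scope.

Section Peregrine.
Variable R : realType.
Local Notation C := R[i].

Definition rC (x : R) : C := Complex x 0.
Definition iC : C := Complex 0 1.
Definition expi (th : R) : C := Complex (cos th) (sin th).

(* rho(lambda) = sqrt(lambda^2+1) on the branch with rho ~ lambda:
   for real lambda <> 0 it equals sgn(lambda) * sqrt(lambda^2+1).
   (The value at lambda = 0, a null set, is immaterial.) *)
Definition rho (l : R) : R :=
  if l < 0 then - Num.sqrt (l ^+ 2 + 1) else Num.sqrt (l ^+ 2 + 1).

(* n(lambda): for real lambda <> 0, n^2 = (l+rho)/(2 rho) > 0 and n -> 1,
   so n is the positive square root. *)
Definition nfac (l : R) : R := Num.sqrt ((l + rho l) / (2 * rho l)).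

Definition i0 : 'I_2 := @Ordinal 2 0 isT.
Definition i1 : 'I_2 := @Ordinal 2 1 isT.

Definition mx22 (a b c d : C) : 'M[C]_2 :=
  \matrix_(i < 2, j < 2)
    if (nat_of_ord i == 0%N) then (if nat_of_ord j == 0%N then a else b)
    else (if nat_of_ord j == 0%N then c else d).

Definition sigma2 : 'M[C]_2 := mx22 0 (- iC) iC 0.

Definition mconj m n (A : 'M[C]_(m, n)) : 'M[C]_(m, n) := map_mx (@conjc R) A.

Definition svec (c : C) : 'cV[C]_2 :=
  \col_(i < 2) (if nat_of_ord i == 0%N then c else - c).
Definition Ncst (c : C) : C := 2 * (c * conjc c).
Definition wfun (c : C) (x t : R) : C := - 2 * c ^+ 2 * (rC x + iC * rC t).

Definition Ymat (c : C) (x t : R) : 'M[C]_2 :=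
  let s := svec c in
  let w := wfun c x t in
  let N := Ncst c in
  (4 * ((1 - w) * conjc (1 - w)) + N ^+ 2)^-1 *:
  ((4 * (1 - conjc w)) *: (s *m s^T *m sigma2)
   + (2 * iC * N) *: (sigma2 *m mconj s *m s^T *m sigma2)).

Definition Gmat (c : C) (l x t : R) : 'M[C]_2 :=
  1%:M + (rC l - iC)^-1 *: Ymat c x t
       + (rC l + iC)^-1 *: (sigma2 *m mconj (Ymat c x t) *m sigma2).

Definition Emat (l : R) : 'M[C]_2 :=
  rC (nfac l) *: mx22 1 (iC * rC (l - rho l)) (iC * rC (l - rho l)) 1.

Definition Expmat (l x t : R) : 'M[C]_2 :=
  mx22 (expi (- (rho l * (x + l * t)))) 0 0 (expi (rho l * (x + l * t))).

Definition U0 (c : C) (l x t : R) : 'M[C]_2 := Gmat c l x t *m Emat l *m Expmat l x t.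

(* second column u^{[2]} = (u1, u2) *)
Definition u1 (c : C) (l x t : R) : C := U0 c l x t i0 i1.
Definition u2 (c : C) (l x t : R) : C := U0 c l x t i1 i1.

Definition mu22 (c : C) (l x t : R) : C :=
  u1 c l x t ^+ 2 - (conjc (u2 c l x t)) ^+ 2.
Definition nu22 (c : C) (l x t : R) : C :=
  iC * u1 c l x t ^+ 2 + iC * (conjc (u2 c l x t)) ^+ 2.

Local Notation leb := (@lebesgue_measure R).

Definition Cintegrable (f : R -> C) : Prop :=
  leb.-integrable setT (fun y => (complex.Re (f y))%:E) /\
  leb.-integrable setT (fun y => (complex.Im (f y))%:E).

Definition Cint (f : R -> C) : C :=
  Complex (Rintegral leb setT (fun y => complex.Re (f y)))
          (Rintegral leb setT (fun y => complex.Im (f y))).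

Definition Cmu (psi1 : R -> C) (c : C) (l : R) : R :=
  complex.Im (Cint (fun y => psi1 y * conjc (nu22 c l y 0))) / pi.
Definition Cnu (psi1 : R -> C) (c : C) (l : R) : R :=
  - (complex.Im (Cint (fun y => psi1 y * conjc (mu22 c l y 0))) / pi).

Definition psi1R (psi1 : R -> C) (c : C) (x t : R) : C :=
  Cint (fun l => rC (Cmu psi1 c l) * mu22 c l x t + rC (Cnu psi1 c l) * nu22 c l x t).

End Peregrine.

(** The entries of [U0 c] are bounded uniformly in (lambda, x, t): the exponential
    factor is unimodular, [Emat] has entries of modulus at most 1, and
    [Gmat = 1 + Y/(lambda - i) + sigma2 Y^* sigma2/(lambda + i)] where
    [|lambda -+ i| >= 1] and [Y] is bounded in (x, t) because its denominator
    [4|1 - w|^2 + N^2] dominates its numerator.  Hence [|mu22|, |nu22| <= K], and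
    [|psi1R x t| <= 2 K \int (|Cmu| + |Cnu|)] for all x, t. *)
From HB Require Import structures.
From mathcomp Require Import all_boot all_order all_algebra.
From mathcomp Require Import all_classical all_reals all_analysis.
From mathcomp Require Import complex.
From mathcomp Require Import ring lra.
Import Order.TTheory GRing.Theory Num.Theory.
Local Open Scope ring_scope.

Local Notation normc := (@ComplexField.Normc.normc _).

(* The integrand of [psi1R] is not known to be measurable in lambda, so these
   bounds avoid measurability: the integral of a nonnegative function is a
   supremum over the simple functions below it. *)
Section IntegralBounds.
Context {R : realType}.
Local Notation leb := (@lebesgue_measure R).

Lemma ge0_le_integralT (f1 f2 : R -> \bar R) :
  (forall x, (0 <= f1 x)%E) -> (forall x, (f1 x <= f2 x)%E) ->
  (\int[leb]_(x in setT) f1 x <= \int[leb]_(x in setT) f2 x)%E.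
Proof.
move=> f1_ge0 le_f12.
have f2_ge0 x : (0 <= f2 x)%E := le_trans (f1_ge0 x) (le_f12 x).
rewrite !ge0_integralTE //; apply: ereal_sup_le.
by move=> _ [h hf1 <-]; exists h => //= x; exact: le_trans (hf1 x) (le_f12 x).
Qed.

Lemma le_normr_Rintegral_dominated (h g : R -> R) :
  (forall x, `|h x| <= g x) -> leb.-integrable setT (fun x => (g x)%:E) ->
  `|Rintegral leb setT h| <= Rintegral leb setT g.
Proof.
move=> le_hg /integrableP [_ g_fin].
have g_ge0 x : 0 <= g x := le_trans (normr_ge0 _) (le_hg x).
have G_fin : (\int[leb]_(x in setT) (g x)%:E < +oo)%E.
  by apply: le_lt_trans g_fin; apply: ge0_le_integralT => x; rewrite lee_fin ?ler_norm.
have G_ge0 : (0 <= \int[leb]_(x in setT) (g x)%:E)%E.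
  by apply: integral_ge0 => x _; rewrite lee_fin.
have le_pos : (\int[leb]_(x in setT) ((EFin \o h)^\+ x)
               <= \int[leb]_(x in setT) (g x)%:E)%E.
  apply: ge0_le_integralT => x; first exact: funepos_ge0.
  rewrite funeposE /= -EFin_max lee_fin ge_max g_ge0 andbT.
  exact: le_trans (ler_norm _) (le_hg x).
have le_neg : (\int[leb]_(x in setT) ((EFin \o h)^\- x)
               <= \int[leb]_(x in setT) (g x)%:E)%E.
  apply: ge0_le_integralT => x; first exact: funeneg_ge0.
  rewrite funenegE /= -EFin_max lee_fin ge_max g_ge0 andbT.
  by have := le_hg x; rewrite ler_norml => /andP[? _]; lra.
have pos_ge0 : (0 <= \int[leb]_(x in setT) ((EFin \o h)^\+ x))%E.
  by apply: integral_ge0 => x _; exact: funepos_ge0.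
have neg_ge0 : (0 <= \int[leb]_(x in setT) ((EFin \o h)^\- x))%E.
  by apply: integral_ge0 => x _; exact: funeneg_ge0.
rewrite /Rintegral integralE.
move: pos_ge0 neg_ge0 le_pos le_neg G_fin G_ge0.
move: (\int[leb]_(x in setT) _)%E (\int[leb]_(x in setT) _)%E
      (\int[leb]_(x in setT) _)%E => [a| |] [b| |] [G| |] //=;
  rewrite ?lee_fin ?leey ?leNye //= => a_ge0 b_ge0 le_aG le_bG _ G_ge0.
by rewrite ler_norml; apply/andP; split; lra.
Qed.

End IntegralBounds.

Section ComplexNorm.
Context {R : realType}.
Local Notation C := R[i].

Lemma normc_ge0 (z : C) : 0 <= normc z.
Proof. by case: z => a b; rewrite /= sqrtr_ge0. Qed.

Lemma normc_conj (z : C) : normc (conjc z) = normc z.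
Proof. by case: z => a b; rewrite /= sqrrN. Qed.

Lemma normc_rC (x : R) : normc (rC x) = `|x|.
Proof. by rewrite /= expr0n addr0 sqrtr_sqr. Qed.

Lemma normc_iC : normc (iC R) = 1.
Proof. by rewrite /= expr0n expr1n add0r sqrtr1. Qed.

Lemma normc_expi (t : R) : normc (expi t) = 1.
Proof. by rewrite /= cos2Dsin2 sqrtr1. Qed.

Lemma normc_natr n : normc (n%:R : C) = n%:R.
Proof.
have -> : (n%:R : C) = rC n%:R by rewrite -(rmorph_nat (real_complex R)).
by rewrite normc_rC ger0_norm.
Qed.

Lemma le_normc_Re (z : C) : `|complex.Re z| <= normc z.
Proof.
case: z => a b /=; rewrite -[`|a|]sqrtr_sqr.
by apply: ler_wsqrtr; rewrite lerDl sqr_ge0.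
Qed.

Lemma le_normc_Im (z : C) : `|complex.Im z| <= normc z.
Proof.
case: z => a b /=; rewrite -[`|b|]sqrtr_sqr.
by apply: ler_wsqrtr; rewrite lerDr sqr_ge0.
Qed.

Lemma normc_le_ReIm (z : C) : normc z <= `|complex.Re z| + `|complex.Im z|.
Proof.
case: z => a b /=.
have s_ge0 := sqrtr_ge0 (a ^+ 2 + b ^+ 2).
have := sqr_sqrtr (addr_ge0 (sqr_ge0 a) (sqr_ge0 b)).
rewrite -[a ^+ 2]real_normK ?num_real // -[b ^+ 2]real_normK ?num_real //.
move: s_ge0 (normr_ge0 a) (normr_ge0 b).
move: (Num.sqrt _) `|a| `|b| => s x y; nra.
Qed.

Lemma normc_invr_le1 (z : C) : 1 <= normc z -> normc z^-1 <= 1.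
Proof.
move=> ge1; rewrite ComplexField.Normc.normcV invf_le1 //.
exact: lt_le_trans ltr01 ge1.
Qed.

Lemma mulc_conj (z : C) : z * conjc z = rC (normc z ^+ 2).
Proof.
case: z => a b; rewrite /rC /= sqr_sqrtr ?addr_ge0 ?sqr_ge0 //.
by simpc; apply/eqP; rewrite eq_complex /=; apply/andP; split; apply/eqP; ring.
Qed.

End ComplexNorm.

Lemma normc_Cint_le {R : realType} (f : R -> R[i]) (g : R -> R) :
  (forall l, normc (f l) <= g l) ->
  (@lebesgue_measure R).-integrable setT (fun l => (g l)%:E) ->
  normc (Cint f) <= 2 * Rintegral (@lebesgue_measure R) setT g.
Proof.
move=> le_fg int_g.
have le_Re : `|Rintegral (@lebesgue_measure R) setT (fun l => complex.Re (f l))|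
    <= Rintegral (@lebesgue_measure R) setT g.
  by apply: le_normr_Rintegral_dominated int_g => l; exact: le_trans (le_normc_Re _) (le_fg l).
have le_Im : `|Rintegral (@lebesgue_measure R) setT (fun l => complex.Im (f l))|
    <= Rintegral (@lebesgue_measure R) setT g.
  by apply: le_normr_Rintegral_dominated int_g => l; exact: le_trans (le_normc_Im _) (le_fg l).
by apply: le_trans (normc_le_ReIm _) _; rewrite /=; lra.
Qed.

Section EntrywiseBounds.
Context {R : realType}.
Local Notation C := R[i].

Definition entries_le {m n : nat} (A : 'M[C]_(m, n)) (K : R) :=
  forall i j, normc (A i j) <= K.

Lemma entries_leD {m n : nat} {A B : 'M[C]_(m, n)} {Ka Kb} :
  entries_le A Ka -> entries_le B Kb -> entries_le (A + B) (Ka + Kb).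
Proof. by move=> hA hB i j; rewrite mxE; apply: le_trans (le_normcD _ _) _; exact: lerD. Qed.

Lemma entries_leZ {m n : nat} {A : 'M[C]_(m, n)} {k kap Ka} :
  normc k <= kap -> entries_le A Ka -> entries_le (k *: A) (kap * Ka).
Proof.
move=> hk hA i j; rewrite mxE ComplexField.Normc.normcM.
by apply: ler_pM; rewrite ?normc_ge0.
Qed.

Lemma entries_leM {m p n : nat} {A : 'M[C]_(m, p)} {B : 'M[C]_(p, n)} {Ka Kb} :
  entries_le A Ka -> entries_le B Kb -> entries_le (A *m B) ((Ka * Kb) *+ p).
Proof.
move=> hA hB i j; rewrite mxE -[p in _ *+ p]card_ord -sumr_const.
elim/big_rec2: _ => [|k y1 y2 _ IH]; first by rewrite ComplexField.Normc.normc0.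
apply: le_trans (le_normcD _ _) _; apply: lerD => //.
by rewrite ComplexField.Normc.normcM; apply: ler_pM; rewrite ?normc_ge0.
Qed.

Lemma entries_le_conj {m n : nat} {A : 'M[C]_(m, n)} {K} :
  entries_le A K -> entries_le (mconj A) K.
Proof. by move=> hA i j; rewrite mxE normc_conj. Qed.

Lemma entries_le_tr {m n : nat} {A : 'M[C]_(m, n)} {K} :
  entries_le A K -> entries_le A^T K.
Proof. by move=> hA i j; rewrite mxE. Qed.

Lemma entries_le1 {n : nat} : entries_le (1%:M : 'M[C]_n) 1.
Proof.
move=> i j; rewrite mxE; case: (i == j).
- by rewrite ComplexField.Normc.normc1.
- by rewrite ComplexField.Normc.normc0.
Qed.

Lemma entries_le_mx22 {a b c d K} :
  normc a <= K -> normc b <= K -> normc c <= K -> normc d <= K ->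
  entries_le (mx22 a b c d) K.
Proof. by move=> ? ? ? ? i j; rewrite mxE; do 2 case: ifP. Qed.

End EntrywiseBounds.

Section PeregrineBounds.
Context {R : realType}.
Local Notation C := R[i].

Lemma rho_spec (l : R) : exists2 s, 0 < s &
  s ^+ 2 = l ^+ 2 + 1 /\ rho l = (if l < 0 then - s else s).
Proof.
exists (Num.sqrt (l ^+ 2 + 1)); first by rewrite sqrtr_gt0 ltr_pwDr ?sqr_ge0.
by rewrite sqr_sqrtr ?addr_ge0 ?sqr_ge0.
Qed.

Lemma normr_sub_rho_le1 (l : R) : `|l - rho l| <= 1.
Proof.
have [s s_gt0 [s_sqr ->]] := rho_spec l.
by rewrite ler_norml; case: ltP => hl; apply/andP; split; nra.
Qed.

Lemma nfac_ge0_le1 (l : R) : 0 <= nfac l <= 1.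
Proof.
rewrite /nfac sqrtr_ge0 -[leRHS]sqrtr1 /=; apply: ler_wsqrtr.
have [s s_gt0 [s_sqr ->]] := rho_spec l.
case: ltP => hl.
- have d_neq0 : 2 * - s != 0 by rewrite mulf_neq0 // oppr_eq0 gt_eqF.
  have := mulfV d_neq0; move: (_^-1) => u inv_u.
  have : u < 0 by nra.
  nra.
- have d_neq0 : 2 * s != 0 by rewrite mulf_neq0 // gt_eqF.
  have := mulfV d_neq0; move: (_^-1) => u inv_u.
  have : 0 < u by nra.
  nra.
Qed.

Lemma normc_inv_rC_subi (l : R) : normc ((rC l - iC R)^-1) <= 1.
Proof.
apply/normc_invr_le1/le_trans/le_normc_Im.
by rewrite /rC /iC /= sub0r normrN normr1.
Qed.

Lemma normc_inv_rC_addi (l : R) : normc ((rC l + iC R)^-1) <= 1.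
Proof.
apply/normc_invr_le1/le_trans/le_normc_Im.
by rewrite /rC /iC /= add0r normr1.
Qed.

(* AM-GM: [2 a b <= a^2 + b^2]. *)
Lemma mulVr_sumsq_le_half (a b : R) : 0 <= a -> 0 < b ->
  (4 * a ^+ 2 + 4 * b ^+ 2)^-1 * (4 * a) <= (2 * b)^-1.
Proof.
move=> a_ge0 b_gt0; have D_gt0 : 0 < 4 * a ^+ 2 + 4 * b ^+ 2 by nra.
rewrite mulrC ler_pdivrMr // [_^-1 * _]mulrC ler_pdivlMr;
  by have := sqr_ge0 (a - b); nra.
Qed.

Lemma mulVr_sumsq_le (a b : R) : 0 < b ->
  (4 * a ^+ 2 + 4 * b ^+ 2)^-1 * (4 * b) <= b^-1.
Proof.
move=> b_gt0; have D_gt0 : 0 < 4 * a ^+ 2 + 4 * b ^+ 2 by nra.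
rewrite mulrC ler_pdivrMr // [_^-1 * _]mulrC ler_pdivlMr //.
by have := sqr_ge0 a; nra.
Qed.

Lemma Ymat_denominatorE (c : C) x t :
  4 * ((1 - wfun c x t) * conjc (1 - wfun c x t)) + Ncst c ^+ 2
  = rC (4 * normc (1 - wfun c x t) ^+ 2 + 4 * (normc c ^+ 2) ^+ 2).
Proof.
rewrite /Ncst !mulc_conj -[rC (_ + _)]/(real_complex R _).
by rewrite /rC !complexr0 rmorphD !rmorphM !rmorph_nat; ring.
Qed.

Lemma normc_sqr_gt0 (c : C) : c != 0 -> 0 < normc c ^+ 2.
Proof.
move=> c_neq0; rewrite exprn_gt0 // lt_def normc_ge0 andbT.
by apply: contra c_neq0 => /eqP/ComplexField.Normc.eq0_normc ->.
Qed.

Lemma normc_Ymat_coef1 (c : C) x t : c != 0 ->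
  normc ((4 * ((1 - wfun c x t) * conjc (1 - wfun c x t)) + Ncst c ^+ 2)^-1
         * (4 * (1 - conjc (wfun c x t)))) <= (2 * normc c ^+ 2)^-1.
Proof.
move=> c_neq0.
have -> : 1 - conjc (wfun c x t) = conjc (1 - wfun c x t) by rewrite rmorphB rmorph1.
rewrite Ymat_denominatorE.
rewrite !ComplexField.Normc.normcM ComplexField.Normc.normcV normc_rC ger0_norm;
  last by rewrite addr_ge0 // mulr_ge0 // sqr_ge0.
rewrite normc_natr normc_conj.
by apply: mulVr_sumsq_le_half; [exact: normc_ge0 | exact: normc_sqr_gt0].
Qed.

Lemma normc_Ymat_coef2 (c : C) x t : c != 0 ->
  normc ((4 * ((1 - wfun c x t) * conjc (1 - wfun c x t)) + Ncst c ^+ 2)^-1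
         * (2 * iC R * Ncst c)) <= (normc c ^+ 2)^-1.
Proof.
move=> c_neq0.
rewrite Ymat_denominatorE /Ncst mulc_conj.
rewrite !ComplexField.Normc.normcM ComplexField.Normc.normcV.
rewrite normc_rC ger0_norm; last by rewrite addr_ge0 // mulr_ge0 // sqr_ge0.
rewrite normc_natr normc_iC normc_rC.
rewrite ger0_norm ?sqr_ge0 // mulr1 [2 * (2 * _)]mulrA -natrM.
exact/mulVr_sumsq_le/normc_sqr_gt0.
Qed.

Lemma entries_le_svec (c : C) : entries_le (svec c) (normc c).
Proof. by move=> i j; rewrite mxE; case: ifP => _; rewrite ?normcN. Qed.

Lemma entries_le_sigma2 : entries_le (sigma2 R) 1.
Proof.
apply: entries_le_mx22;
  by rewrite ?ComplexField.Normc.normc0 ?normcN ?normc_iC.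
Qed.

Lemma Ymat_bounded (c : C) : c != 0 ->
  exists K, forall x t, entries_le (Ymat c x t) K.
Proof.
move=> c_neq0.
have s_le := entries_le_svec c.
have ss_le := entries_leM (entries_leM s_le (entries_le_tr s_le)) entries_le_sigma2.
have sss_le := entries_leM (entries_leM (entries_leM entries_le_sigma2
  (entries_le_conj s_le)) (entries_le_tr s_le)) entries_le_sigma2.
eexists => x t; rewrite /Ymat scalerDr !scalerA.
apply: entries_leD.
- exact: entries_leZ (normc_Ymat_coef1 c x t c_neq0) ss_le.
- exact: entries_leZ (normc_Ymat_coef2 c x t c_neq0) sss_le.
Qed.

Lemma Gmat_bounded (c : C) : c != 0 ->
  exists K, forall l x t, entries_le (Gmat c l x t) K.
Proof.
move=> /Ymat_bounded [KY Y_le].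
eexists => l x t; apply: entries_leD; first apply: entries_leD.
- exact: entries_le1.
- exact: entries_leZ (normc_inv_rC_subi l) (Y_le x t).
- apply: entries_leZ (normc_inv_rC_addi l) _.
  exact: entries_leM (entries_leM entries_le_sigma2
    (entries_le_conj (Y_le x t))) entries_le_sigma2.
Qed.

Lemma entries_le_Emat (l : R) : entries_le (Emat l) (1 * 1).
Proof.
apply: entries_leZ.
  by rewrite normc_rC ger0_norm; have /andP[] := nfac_ge0_le1 l.
apply: entries_le_mx22; rewrite ?ComplexField.Normc.normc1 //;
  by rewrite ComplexField.Normc.normcM normc_iC normc_rC mul1r normr_sub_rho_le1.
Qed.

Lemma entries_le_Expmat (l x t : R) : entries_le (Expmat l x t) 1.
Proof. by apply: entries_le_mx22; rewrite ?normc_expi ?ComplexField.Normc.normc0. Qed.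

Lemma U0_bounded (c : C) : c != 0 ->
  exists K, forall l x t, entries_le (U0 c l x t) K.
Proof.
move=> /Gmat_bounded [KG G_le]; eexists => l x t.
exact: entries_leM (entries_leM (G_le l x t) (entries_le_Emat l)) (entries_le_Expmat l x t).
Qed.

Lemma mu22_nu22_bounded (c : C) : c != 0 -> exists K, forall l x t,
  normc (mu22 c l x t) <= K /\ normc (nu22 c l x t) <= K.
Proof.
move=> /U0_bounded [K U_le].
have sqr_le (u : C) : normc u <= K -> normc (u ^+ 2) <= K * K.
  by move=> hu; rewrite ComplexField.Normc.normcM; apply: ler_pM; rewrite ?normc_ge0.
exists (K * K + K * K) => l x t.
have u1_le := sqr_le _ (U_le l x t i0 i1).
have u2_le : normc (conjc (u2 c l x t) ^+ 2) <= K * K.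
  by apply: sqr_le; rewrite normc_conj; exact: U_le.
split; apply: le_trans (le_normcD _ _) _.
- by rewrite normcN; exact: lerD.
- by rewrite !(ComplexField.Normc.normcM (iC R)) normc_iC !mul1r; exact: lerD.
Qed.

End PeregrineBounds.

Theorem mainTheorem14 (R : realType) (c : R[i]) (psi1 : R -> R[i]) :
  c != 0 ->
  {ae (@lebesgue_measure R), forall l : R,
      Cintegrable (fun y => psi1 y * conjc (nu22 c l y 0)) /\
      Cintegrable (fun y => psi1 y * conjc (mu22 c l y 0))} ->
  (@lebesgue_measure R).-integrable setT (fun l => (Cmu psi1 c l)%:E) ->
  (@lebesgue_measure R).-integrable setT (fun l => (Cnu psi1 c l)%:E) ->
  exists M : R, forall x t : R, ComplexField.Normc.normc (psi1R psi1 c x t) <= M.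
Proof.
move=> c_neq0 _ int_mu int_nu.
have [K munu_le] := mu22_nu22_bounded c c_neq0.
pose g l := K * `|Cmu psi1 c l| + K * `|Cnu psi1 c l|.
have int_g : (@lebesgue_measure R).-integrable setT (fun l => (g l)%:E).
  have int_Kmu := integrableZl measurableT K (integrable_norm int_mu).
  have int_Knu := integrableZl measurableT K (integrable_norm int_nu).
  apply: eq_integrable measurableT _ _ _ (integrableD measurableT int_Kmu int_Knu) => l _ /=.
  by rewrite /g EFinD !EFinM.
exists (2 * Rintegral (@lebesgue_measure R) setT g) => x t.
apply: normc_Cint_le int_g => l.
have [mu_le nu_le] := munu_le l x t.
apply: le_trans (le_normcD _ _) _.
rewrite !ComplexField.Normc.normcM !normc_rC /g.
by apply: lerD; rewrite mulrC ler_wpM2r.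
Qed.
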